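(* Let $V$ be a space. The following are equivalent: (i) $V$ is homothetic to $\langle 1,\tau\rangle_{\mathbb{Q}}$ for some $\tau$ with $|\tau|=1$; (ii) $V$ is homothetic to $\langle 1,\tau\rangle_{\mathbb{Q}}$ for some nonzero purely imaginary $\tau$; (iii) $V$ is homothetic to a space $V'$ with $V'=\overline{V'}$.
   Context: A space is a $2$-dimensional $\mathbb{Q}$-vector subspace $V\subset\mathbb{C}$ containing two $\mathbb{R}$-linearly independent vectors; $\langle 1,\tau\rangle_{\mathbb{Q}}=\mathbb{Q}+\mathbb{Q}\tau$. Spaces $V_1,V_2$ are homothetic if $V_2=\lambda V_1$ for some $\lambda\in\mathbb{C}^*$. $\overline{V}$ denotes the complex conjugate of $V$. *)

From HB Require Import structures.
From mathcomp Require Import all_boot all_order all_algebra.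
From mathcomp Require Import complex.
From mathcomp Require Import boolp classical_sets reals.
Set Implicit Arguments. Unset Strict Implicit. Unset Printing Implicit Defensive.
Import Order.TTheory GRing.Theory Num.Theory.
Local Open Scope ring_scope.
Local Open Scope classical_set_scope.

Section Spaces.
Variable R : realType.
Local Notation C := R[i].

Definition qspan (u v : C) : set C :=
  [set z | exists a b : rat, z = ratr a * u + ratr b * v].

Definition Q_indep (u v : C) : Prop :=
  forall a b : rat, ratr a * u + ratr b * v = 0 -> a = 0 /\ b = 0.

Definition R_indep (u v : C) : Prop :=
  forall a b : R, (a%:C)%C * u + (b%:C)%C * v = 0 -> a = 0 /\ b = 0.

(* A space: a 2-dimensional Q-vector subspace of C (i.e. the Q-span of two
   Q-linearly independent vectors) containing two R-linearly independent
   vectors. *)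
Definition is_space (V : set C) : Prop :=
  (exists u v : C, Q_indep u v /\ V = qspan u v) /\
  (exists u v : C, V u /\ V v /\ R_indep u v).

Definition homothetic (V1 V2 : set C) : Prop :=
  exists lambda : C, lambda != 0 /\ V2 = (fun z => lambda * z) @` V1.

Definition conj_set (V : set C) : set C := (fun z => z^*)%C @` V.

End Spaces.

(* Complex conjugation restricts to a Q-linear involution of a self-conjugate
   space V' = <u, v>.  It cannot be a real scalar on V' (V' would then lie on
   the real or the imaginary axis), so some w in V' is not an eigenvector:
   then V' = <w, w^*> = w <1, w^*/w> with |w^*/w| = 1.  Conversely, for
   |tau| = 1 the Cayley transform (tau - 1)/(tau + 1) is purely imaginary and
   <1, tau> = (tau + 1) <1, (tau - 1)/(tau + 1)>, while <1, tau> with tau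
   purely imaginary is self-conjugate.  Here tau <> -1, 1 because the Q-span of
   two reals is not a space. *)
From mathcomp Require Import all_boot all_order all_algebra.
From mathcomp Require Import complex.
From mathcomp Require Import classical_sets reals.
From mathcomp Require Import ring lra.
Import Order.TTheory GRing.Theory Num.Theory.
Local Open Scope ring_scope.
Local Open Scope classical_set_scope.

Section Spaces.
Context {R : realType}.
Local Notation C := R[i].
Local Notation dilate l S := ((fun z : C => l * z) @` S).

Lemma dilateM (l m : C) (S : set C) : dilate l (dilate m S) = dilate (l * m) S.
Proof.
apply/seteqP; split => z.
  by case=> w [y Sy <-] <-; exists y => //; rewrite mulrA.
by case=> y Sy <-; exists (m * y); [exists y | rewrite mulrA].
Qed.

Lemma dilate1 (S : set C) : dilate 1 S = S.
Proof.
by apply/seteqP; split => z; [case=> y Sy <-; rewrite mul1r | exists z; rewrite ?mul1r].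
Qed.

Lemma homothetic_sym {V W : set C} : homothetic V W -> homothetic W V.
Proof.
move=> [l [l0 ->]]; exists l^-1; split; first by rewrite invr_eq0.
by rewrite dilateM mulVf // dilate1.
Qed.

Lemma homothetic_trans {U V W : set C} :
  homothetic U V -> homothetic V W -> homothetic U W.
Proof.
move=> [l [l0 ->]] [m [m0 ->]]; exists (m * l).
by rewrite mulf_neq0 // dilateM.
Qed.

Lemma dilate_qspan (l u v : C) : dilate l (qspan u v) = qspan (l * u) (l * v).
Proof.
apply/seteqP; split => z.
  by case=> w [a [b ->]] <-; exists a, b; ring.
by case=> a [b ->]; exists (ratr a * u + ratr b * v); [exists a, b | ring].
Qed.

Lemma qspan_change_basis (u v : C) (p q r s : rat) : p * s - q * r != 0 ->
  qspan (ratr p * u + ratr q * v) (ratr r * u + ratr s * v) = qspan u v.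
Proof.
move=> det0; apply/seteqP; split => z.
  case=> a [b ->]; exists (a * p + b * r), (a * q + b * s).
  rewrite !rmorphD !rmorphM /=; ring.
case=> a [b ->].
pose x := (a * s - r * b) / (p * s - q * r).
pose y := (p * b - q * a) / (p * s - q * r).
have ax : a = x * p + y * r by rewrite /x /y; field.
have bx : b = x * q + y * s by rewrite /x /y; field.
by exists x, y; rewrite {1}ax {1}bx !rmorphD !rmorphM /=; ring.
Qed.

Lemma Q_indep_scale (m u v : C) : m != 0 -> Q_indep u v -> Q_indep (m * u) (m * v).
Proof.
move=> m0 uv a b abuv; apply: uv; apply: (mulfI m0).
by rewrite mulr0 -abuv; ring.
Qed.

Lemma R_indep_scale (m u v : C) : m != 0 -> R_indep u v -> R_indep (m * u) (m * v).
Proof.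
move=> m0 uv a b abuv; apply: uv; apply: (mulfI m0).
by rewrite mulr0 -abuv; ring.
Qed.

Lemma is_space_dilate (m : C) (V : set C) : m != 0 -> is_space V ->
  is_space (dilate m V).
Proof.
move=> m0 [[u [v [uv ->]]] [x [y [Vx [Vy xy]]]]]; split.
  by exists (m * u), (m * v); rewrite dilate_qspan; split; first exact: Q_indep_scale.
exists (m * x), (m * y); split; first by exists x.
by split; [exists y | exact: R_indep_scale].
Qed.

Lemma homothetic_is_space {V W : set C} : homothetic V W -> is_space W -> is_space V.
Proof. by move=> /homothetic_sym [l [l0 ->]]; apply: is_space_dilate. Qed.

Lemma Q_indep_comb_neq0 (u v : C) (p q : rat) : Q_indep u v ->
  (p != 0) || (q != 0) -> ratr p * u + ratr q * v != 0.
Proof. by move=> uv pq; apply/eqP => /uv[p0 q0]; rewrite p0 q0 eqxx in pq. Qed.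

Lemma collinear_not_R_indep (l : C) (r s : R) :
  ~ R_indep (l * r%:C)%C (l * s%:C)%C.
Proof.
move=> rs; have [r0 | r_neq0] := eqVneq r 0.
  have [] := rs 1 0; last by move/eqP; rewrite oner_eq0.
  by rewrite r0 !rmorph0 rmorph1; ring.
have [] := rs s (- r); last by move=> _ /eqP; rewrite oppr_eq0 (negbTE r_neq0).
by rewrite rmorphN /=; ring.
Qed.

Lemma ratr_complex (a : rat) : (ratr a : C) = (ratr a)%:C%C.
Proof. by rewrite fmorph_rat. Qed.

Lemma is_space_qspan1_nonreal {t : C} : is_space (qspan 1 t) -> t \isn't Num.real.
Proof.
apply: contraPN => /complex_realP[k ->].
have ratr_real (a b : rat) : ratr a * 1 + ratr b * k%:C%C =
    1 * (ratr a + ratr b * k)%:C%C :> C.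
  by rewrite !ratr_complex; simpc.
move=> [_ [x [y [[a [b ->]] [[c [d ->]] xy]]]]].
by move: xy; rewrite !ratr_real; apply: collinear_not_R_indep.
Qed.

Lemma conjc_ratrM (a : rat) (u : C) : ((ratr a * u)^*)%C = ratr a * u^*%C.
Proof. by rewrite rmorphM /= fmorph_rat. Qed.

Lemma conjc_comb (a b : rat) (u v : C) :
  ((ratr a * u + ratr b * v)^*)%C = ratr a * u^*%C + ratr b * v^*%C.
Proof. by rewrite rmorphD /= !conjc_ratrM. Qed.

Lemma conj_qspan (u v : C) : conj_set (qspan u v) = qspan u^*%C v^*%C.
Proof.
apply/seteqP; split => z.
  by case=> w [a [b ->]] <-; exists a, b; rewrite conjc_comb.
case=> a [b ->]; exists (ratr a * u + ratr b * v); first by exists a, b.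
by rewrite conjc_comb.
Qed.

Lemma conjc_fixed_real {z : C} : z^*%C = z -> z = 1 * (complex.Re z)%:C%C.
Proof.
case: z => x y /= /eqP; rewrite eq_complex /= => /andP[_ /eqP yN].
by rewrite mul1r; congr Complex; lra.
Qed.

Lemma conjc_eigen_imaginary {a : R} {z : C} : a != 1 ->
  z^*%C = a%:C%C * z -> z = 'i%C * (complex.Im z)%:C%C.
Proof.
move=> a1; case: z => x y /=; simpc => /eqP; rewrite eq_complex /=.
move=> /andP[/eqP xa _]; simpc; congr Complex.
have a1' : 1 - a != 0 by rewrite subr_eq0 eq_sym.
by apply: (mulIf a1'); rewrite mul0r; lra.
Qed.

Lemma conj_scalar_not_R_indep {V : set C} (a : R) {x y : C} :
  (forall z, V z -> z^*%C = a%:C%C * z) -> V x -> V y -> ~ R_indep x y.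
Proof.
move=> conjV Vx Vy; have [a1 | a1] := eqVneq a 1.
  have fixV z : V z -> z^*%C = z by move/conjV; rewrite a1 rmorph1 mul1r.
  rewrite (conjc_fixed_real (fixV x Vx)) (conjc_fixed_real (fixV y Vy)).
  exact: collinear_not_R_indep.
rewrite (conjc_eigen_imaginary a1 (conjV x Vx)).
rewrite (conjc_eigen_imaginary a1 (conjV y Vy)).
exact: collinear_not_R_indep.
Qed.

Lemma conjc_eqN_Re0 (z : C) : z^*%C = - z <-> complex.Re z = 0.
Proof.
case: z => x y /=; split.
  by move/eqP; rewrite eq_complex /= => /andP[/eqP xN _]; lra.
by move=> ->; apply/eqP; rewrite eq_complex /= oppr0 !eqxx.
Qed.

Lemma cayley_unit_Re0 (t : C) : `|t| = 1 -> t + 1 != 0 ->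
  complex.Re ((t - 1) / (t + 1)) = 0.
Proof.
move=> t1 t1_neq0; apply/conjc_eqN_Re0.
have t0 : t != 0 by rewrite -normr_eq0 t1 oner_eq0.
have conj_t : t^*%C = t^-1.
  by apply: (mulfI t0); rewrite -sqr_normc t1 expr1n mulfV.
have tV1_neq0 : t^-1 + 1 != 0.
  have -> : t^-1 + 1 = t^-1 * (t + 1) by rewrite mulrDr mulVf // mulr1 addrC.
  by rewrite mulf_neq0 ?invr_eq0.
rewrite rmorphM fmorphV rmorphB rmorphD rmorph1 /= conj_t.
by field; rewrite t0 t1_neq0.
Qed.

Lemma homothetic_qspan_cayley {t : C} : t + 1 != 0 ->
  homothetic (qspan 1 ((t - 1) / (t + 1))) (qspan 1 t).
Proof.
move=> t1_neq0; exists (t + 1); split => //.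
rewrite dilate_qspan mulr1 mulrC divfK // -(qspan_change_basis 1 t 1 1 (-1) 1).
  by congr qspan; rewrite ?rmorph1 ?rmorphN1; ring.
by rewrite (_ : _ - _ = 2%:R) ?pnatr_eq0 //; ring.
Qed.

Lemma qspan_conj_imaginary (t : C) : complex.Re t = 0 ->
  conj_set (qspan 1 t) = qspan 1 t.
Proof.
move=> /conjc_eqN_Re0 conj_t; rewrite conj_qspan conjc1 conj_t.
rewrite -{1}(qspan_change_basis 1 t 1 0 0 (-1)).
  by congr qspan; rewrite ?rmorph1 ?rmorph0 ?rmorphN1; ring.
by rewrite (_ : _ - _ = -1) ?oppr_eq0 ?oner_eq0 //; ring.
Qed.

Lemma normc_conj_div (w : C) : w != 0 -> `|w^*%C / w| = 1.
Proof. by move=> w0; rewrite normrM normrV ?unitfE // normcJ divff // normr_eq0. Qed.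

Lemma homothetic_qspan_conj_div (w : C) : w != 0 ->
  homothetic (qspan 1 (w^*%C / w)) (qspan w w^*%C).
Proof. by move=> w0; exists w; rewrite dilate_qspan mulr1 mulrC divfK. Qed.

(* [(a, b; c, d)] is the matrix of conjugation on the basis [(u, v)] and the
   determinant is that of the pair [(w, w^* )] for [w = p u + q v]. *)
Lemma conj_matrix_not_scalar {u v x y : C} {a b c d : rat} :
  u^*%C = ratr a * u + ratr b * v -> v^*%C = ratr c * u + ratr d * v ->
  qspan u v x -> qspan u v y -> R_indep x y ->
  exists p q : rat, p * (p * b + q * d) - q * (p * a + q * c) != 0.
Proof.
move=> conj_u conj_v Vx Vy xy.
have [b0 | b_neq0] := eqVneq b 0; last first.
  by exists 1, 0; rewrite (_ : _ - _ = b) //; ring.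
have [c0 | c_neq0] := eqVneq c 0; last first.
  by exists 0, 1; rewrite (_ : _ - _ = - c) ?oppr_eq0 //; ring.
have [ad | a_neq_d] := eqVneq a d; last first.
  by exists 1, 1; rewrite (_ : _ - _ = d - a) ?subr_eq0 1?eq_sym // b0 c0; ring.
exfalso; apply: (conj_scalar_not_R_indep (ratr a) _ Vx Vy xy).
move=> _ [p [q ->]]; rewrite conjc_comb conj_u conj_v b0 c0 -ad -ratr_complex.
by rewrite rmorph0; ring.
Qed.

Lemma self_conjugate_space_basis {V : set C} : is_space V -> V = conj_set V ->
  exists2 w, w != 0 & V = qspan w w^*%C.
Proof.
move=> [[u [v [uv defV]]] [x [y [Vx [Vy xy]]]]] selfV.
have conjV z : V z -> V z^*%C by rewrite {2}selfV; exists z.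
rewrite defV in conjV Vx Vy.
have [a [b conj_u]] : qspan u v u^*%C.
  by apply: (conjV u); exists 1, 0; rewrite rmorph1 rmorph0; ring.
have [c [d conj_v]] : qspan u v v^*%C.
  by apply: (conjV v); exists 0, 1; rewrite rmorph1 rmorph0; ring.
have [p [q det]] := conj_matrix_not_scalar conj_u conj_v Vx Vy xy.
exists (ratr p * u + ratr q * v).
  apply: Q_indep_comb_neq0 => //; rewrite -negb_and.
  by apply: contraNN det => /andP[/eqP-> /eqP->]; rewrite !mul0r subr0.
rewrite conjc_comb conj_u conj_v defV.
rewrite -(qspan_change_basis u v p q (p * a + q * c) (p * b + q * d)) //.
by congr qspan; rewrite !rmorphD !rmorphM /=; ring.
Qed.

End Spaces.

Theorem lemma4p1 (R : realType) (V : set R[i]) (hV : is_space V) :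
  [<-> (exists tau : R[i], `|tau| = 1 /\ homothetic (qspan 1 tau) V);
       (exists tau : R[i], tau != 0 /\ complex.Re tau = 0 /\
                           homothetic (qspan 1 tau) V);
       (exists V' : set R[i], is_space V' /\ V' = conj_set V' /\
                              homothetic V' V)].
Proof.
tfae.
- move=> [t [t1 tV]].
  have t_nonreal := is_space_qspan1_nonreal (homothetic_is_space tV hV).
  have tD1 : t + 1 != 0.
    apply: contraNneq t_nonreal => /eqP; rewrite addr_eq0 => /eqP->.
    by rewrite rpredN rpred1.
  have tB1 : t - 1 != 0.
    by apply: contraNneq t_nonreal => /eqP; rewrite subr_eq0 => /eqP->; rewrite rpred1.
  exists ((t - 1) / (t + 1)); split; first by rewrite mulf_neq0 ?invr_eq0.
  split; first exact: cayley_unit_Re0.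
  exact: homothetic_trans (homothetic_qspan_cayley tD1) tV.
- move=> [t [_ [Ret tV]]]; exists (qspan 1 t).
  by split; [exact: homothetic_is_space tV hV | rewrite qspan_conj_imaginary].
- move=> [V' [V'_space [selfV V'V]]].
  have [w w0 defV'] := self_conjugate_space_basis V'_space selfV.
  exists (w^*%C / w); split; first exact: normc_conj_div.
  by apply: homothetic_trans V'V; rewrite defV'; exact: homothetic_qspan_conj_div.
Qed.
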